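(* Let $\mathcal C\subseteq 2^{[n]}$ be a code and suppose that a neuron $i\in[n]$ is a piercing of $\mathcal C$ (i.e. a $k$-piercing for some $k$). Then $\mathcal C$ is inductively pierced if and only if $\mathcal C\setminus i$ is inductively pierced.
   Context: A code is a set $\mathcal C\subseteq 2^{[n]}$, $[n]=\{1,\dots,n\}$, elements of $[n]$ being neurons. Standing conventions: $\emptyset\in\mathcal C$; every neuron lies in some codeword; no two distinct neurons lie in exactly the same codewords. $\mathcal C\setminus i$ is obtained by removing $i$ from every codeword. For $\sigma\subseteq\tau$, $[\sigma,\tau]=\{\gamma:\sigma\subseteq\gamma\subseteq\tau\}$, of rank $|\tau\setminus\sigma|$. A neuron $i$ is a $k$-piercing of $\mathcal C$ if there are $\sigma\subseteq\tau\subseteq[n]\setminus\{i\}$ with $[\sigma,\tau]$ of rank $k$, $[\sigma,\tau]\subseteq\mathcal C\setminus i$, and $\mathcal C=(\mathcal C\setminus i)\cup[\sigma\cup\{i\},\tau\cup\{i\}]$. A code is $k$-inductively pierced if $\mathcal C=\{\emptyset\}$, or some neuron $j$ is a $k'$-piercing for some $k'\le k$ and $\mathcal C\setminus j$ is $k$-inductively pierced; inductively pierced means $k$-inductively pierced for some $k$. *)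

(* Neurons are 'I_n (representing [n] = {1,...,n}),
   codewords are {set 'I_n}, codes are {set {set 'I_n}}. *)
From mathcomp Require Import all_boot.
Set Implicit Arguments. Unset Strict Implicit. Unset Printing Implicit Defensive.

Definition is_code (n : nat) (C : {set {set 'I_n}}) : Prop :=
  [/\ set0 \in C,
      (forall j : 'I_n, exists2 c, c \in C & j \in c)
    & (forall j l : 'I_n, (forall c, c \in C -> (j \in c) = (l \in c)) -> j = l)].

Definition del_neuron (n : nat) (C : {set {set 'I_n}}) (i : 'I_n) : {set {set 'I_n}} :=
  [set c :\ i | c in C].

Definition interval_set (n : nat) (sigma tau : {set 'I_n}) : {set {set 'I_n}} :=
  [set g : {set 'I_n} | (sigma \subset g) && (g \subset tau)].

Definition k_piercing (n : nat) (k : nat) (C : {set {set 'I_n}}) (i : 'I_n) : Prop :=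
  exists sigma tau : {set 'I_n},
    [/\ sigma \subset tau, i \notin tau,
        #|tau :\: sigma| = k,
        interval_set sigma tau \subset del_neuron C i
      & C = del_neuron C i :|: interval_set (i |: sigma) (i |: tau)].

Definition is_piercing (n : nat) (C : {set {set 'I_n}}) (i : 'I_n) : Prop :=
  exists k, k_piercing k C i.

Inductive k_ind_pierced (n : nat) (k : nat) : {set {set 'I_n}} -> Prop :=
  | kip_base : k_ind_pierced k [set set0]
  | kip_step (C : {set {set 'I_n}}) (j : 'I_n) (k' : nat) :
      k' <= k -> k_piercing k' C j -> k_ind_pierced k (del_neuron C j) ->
      k_ind_pierced k C.

Definition ind_pierced (n : nat) (C : {set {set 'I_n}}) : Prop :=
  exists k, k_ind_pierced k C.

From mathcomp Require Import all_boot.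

Set Implicit Arguments.
Unset Strict Implicit.

(* Deleting two neurons commutes, and an [i]-piercing of [C] of rank [k] stays
   an [i]-piercing of rank at most [k] after any other neuron [j] is deleted
   (delete [j] from both ends of the interval).  Hence if [C] is pierced by a
   sequence of neurons, deleting [i] from every intermediate code gives a
   piercing sequence of [C \ i]; at the step where the sequence removes [i]
   itself the two codes already agree.  Conversely a piercing sequence of
   [C \ i] is extended to one of [C] by first removing [i]. *)

Lemma setU1D1 (T : finType) (i j : T) (s : {set T}) :
  i != j -> (i |: s) :\ j = i |: (s :\ j).
Proof.
by move=> ij; apply/setP => x; rewrite !inE; case: (eqVneq x i) => [->|] //=; rewrite ij.
Qed.

Section Piercing.

Variable n : nat.
Implicit Types (C : {set {set 'I_n}}) (s t : {set 'I_n}) (i j : 'I_n).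

Lemma del_neuronC C i j :
  del_neuron (del_neuron C i) j = del_neuron (del_neuron C j) i.
Proof.
by rewrite /del_neuron -!imset_comp; apply: eq_imset => c /=; rewrite !setDDl setUC.
Qed.

Lemma del_neuronU C1 C2 i :
  del_neuron (C1 :|: C2) i = del_neuron C1 i :|: del_neuron C2 i.
Proof. exact: imsetU. Qed.

Lemma del_neuron_interval s t j : s \subset t ->
  del_neuron (interval_set s t) j = interval_set (s :\ j) (t :\ j).
Proof.
move=> st; apply/setP => g; rewrite /interval_set inE; apply/imsetP/andP.
  by case=> c; rewrite inE => /andP[sc ct] ->; split; apply: setSD.
case=> sg gt; exists (g :|: s).
  by rewrite inE subsetUr subUset st (subset_trans gt (subsetDl _ _)).
apply/setP => x; rewrite !inE; case: (eqVneq x j) => [->|xj] /=.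
  by apply/negbTE/negP => /(subsetP gt); rewrite !inE eqxx.
case gx: (x \in g) => //=; apply/esym/negbTE/negP => xs.
by move: gx; have /subsetP/(_ x) := sg; rewrite !inE xj xs => ->.
Qed.

Lemma k_piercing_del_neuron k C i j : i != j -> k_piercing k C i ->
  exists2 k', k' <= k & k_piercing k' (del_neuron C j) i.
Proof.
move=> ij [s [t [st it rank_k sub_del defC]]].
exists #|(t :\ j) :\: (s :\ j)|.
  rewrite -rank_k subset_leq_card //; apply/subsetP => x; rewrite !inE.
  by case/andP=> xNs /andP[xj ->]; rewrite andbT; apply: contra xNs => ->; rewrite xj.
exists (s :\ j), (t :\ j); split => //.
- exact: setSD.
- by rewrite inE negb_and it orbT.
- by rewrite del_neuronC -del_neuron_interval // imsetS.
by rewrite del_neuronC {1}defC del_neuronU del_neuron_interval ?setUS // !setU1D1.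
Qed.

Lemma k_piercing_set1_set0 k i : ~ k_piercing k [set set0 : {set 'I_n}] i.
Proof.
case=> s [t [st _ _ _ defC]].
have : i |: s \in [set set0 : {set 'I_n}].
  by rewrite defC; apply/setUP; right; rewrite inE subxx setUS.
by rewrite inE => /eqP/setP/(_ i); rewrite !inE eqxx.
Qed.

Lemma k_ind_pierced_del_piercing k C i k0 :
  k_ind_pierced k C -> k_piercing k0 C i -> k_ind_pierced k (del_neuron C i).
Proof.
move=> kipC; elim: kipC i k0 => [|D j kj kj_le pj kipDj IH] i k0 pi.
  by case: (k_piercing_set1_set0 pi).
have [<- | ji] := eqVneq j i; first exact: kipDj.
have ij : i != j by rewrite eq_sym.
have [ki _ pi_j] := k_piercing_del_neuron ij pi.
have [kj' kj'_le pj_i] := k_piercing_del_neuron ji pj.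
apply: (kip_step (leq_trans kj'_le kj_le) pj_i).
by rewrite del_neuronC; apply: IH pi_j.
Qed.

Lemma k_ind_pierced_leq k k' C :
  k <= k' -> k_ind_pierced k C -> k_ind_pierced k' C.
Proof.
move=> kk' kipC; elim: kipC => [|D j kj kj_le pj _ IH]; first exact: kip_base.
exact: kip_step (leq_trans kj_le kk') pj IH.
Qed.

End Piercing.

Theorem proposition1p8 (n : nat) (C : {set {set 'I_n}}) (i : 'I_n) :
  is_code C -> is_piercing C i ->
  (ind_pierced C <-> ind_pierced (del_neuron C i)).
Proof.
move=> _ [k0 pi]; split.
  by case=> k kipC; exists k; apply: k_ind_pierced_del_piercing pi.
case=> k kipCi; exists (maxn k k0).
apply: kip_step (leq_maxr k k0) pi _.
exact: k_ind_pierced_leq (leq_maxl k k0) kipCi.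
Qed.
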